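(* Let $A\in\mathbb{R}^{nd\times nd}$ be symmetric with $d\times d$ blocks $A_{ij}$, $A_{ii}=I_d$, let $p>d$, and $f(S)=\sum_{i,j}\langle A_{ij},S_iS_j^{\top}\rangle$ on $\{S\in\mathbb{R}^{nd\times p}: S_iS_i^{\top}=I_d\ \forall i\}$. If $S$ is a local maximizer of $f$, then \[ \Lambda_{ii}:=\frac12\sum_{j=1}^n(S_iS_j^{\top}A_{ji}+A_{ij}S_jS_i^{\top})\succeq I_d\quad\text{for all }1\le i\le n. \]
   Context: $S_i$ is the $i$-th $d\times p$ block of $S$; $\langle X,Y\rangle=\mathrm{Tr}(XY^{\top})$; $\succeq$ is the Loewner order. *)

From mathcomp Require Import all_boot all_order all_algebra.
From mathcomp Require Import reals.
Set Implicit Arguments. Unset Strict Implicit. Unset Printing Implicit Defensive.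
Import Order.TTheory GRing.Theory Num.Theory.
Local Open Scope ring_scope.

(* A block matrix in R^{nd x nd} is represented by its d x d blocks A i j;
   S in R^{nd x p} is represented by its d x p blocks S i. *)

Definition frob_inner (R : realType) (m k : nat) (X Y : 'M[R]_(m, k)) : R :=
  \tr (X *m Y^T).

Definition block_sym (R : realType) (n d : nat) (A : 'I_n -> 'I_n -> 'M[R]_d) :=
  forall i j, (A i j)^T = A j i.

Definition fobj (R : realType) (n d p : nat) (A : 'I_n -> 'I_n -> 'M[R]_d)
  (S : 'I_n -> 'M[R]_(d, p)) : R :=
  \sum_(i < n) \sum_(j < n) frob_inner (A i j) (S i *m (S j)^T).

Definition feasible (R : realType) (n d p : nat) (S : 'I_n -> 'M[R]_(d, p)) :=
  forall i, S i *m (S i)^T = 1%:M.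

(* local maximizer on the feasible set (Euclidean topology of R^{nd x p},
   expressed entrywise) *)
Definition local_max (R : realType) (n d p : nat) (A : 'I_n -> 'I_n -> 'M[R]_d)
  (S : 'I_n -> 'M[R]_(d, p)) :=
  feasible S /\
  exists eps : R, 0 < eps /\
    forall T : 'I_n -> 'M[R]_(d, p), feasible T ->
      (forall i a b, `|T i a b - S i a b| < eps) ->
      fobj A T <= fobj A S.

Definition psd (R : realType) (d : nat) (M : 'M[R]_d) :=
  M^T = M /\ forall v : 'rV[R]_d, 0 <= (v *m M *m v^T) 0 0.

Definition loewner_ge (R : realType) (d : nat) (X Y : 'M[R]_d) := psd (X - Y).

Definition Lambda (R : realType) (n d p : nat) (A : 'I_n -> 'I_n -> 'M[R]_d)
  (S : 'I_n -> 'M[R]_(d, p)) (i : 'I_n) : 'M[R]_d :=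
  2^-1 *: \sum_(j < n) (S i *m (S j)^T *m A j i + A i j *m S j *m (S i)^T).

From mathcomp Require Import all_boot all_order all_algebra.
From mathcomp Require Import reals.
From mathcomp Require Import ring lra.

Set Implicit Arguments.
Unset Strict Implicit.
Unset Printing Implicit Defensive.

Import Order.TTheory GRing.Theory Num.Theory.
Local Open Scope ring_scope.

(* Fix i and a row vector v, and let G = sum_k A_ik S_k, so that Lambda_ii is
   the symmetric part of G S_i^T.  As p > d, some u <> 0 is orthogonal to the
   rows of S_i; choose its sign so that v G u^T >= 0.  The matrices
   S_i + v^T (b u - a v S_i), with (a, b) on the circle
   b^2 |u|^2 + a^2 |v|^2 = 2 a, are again feasible and tend to S_i with (a, b),
   and replacing S_i by them changes f by
   2 b (v G u^T) + 2 a (|v|^2 - v G S_i^T v^T).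
   Local maximality makes this nonpositive for some small a > 0, b >= 0, hence
   v G S_i^T v^T >= |v|^2, i.e. v (Lambda_ii - I) v^T >= 0. *)

Lemma sumr_delta (R : nzSemiRingType) n (F : 'I_n -> R) i :
  \sum_j (j == i)%:R * F j = F i.
Proof.
rewrite (bigD1 i) //= eqxx mul1r big1 ?addr0 // => j /negbTE ->.
by rewrite mul0r.
Qed.

Lemma quad_form_tr (R : comNzRingType) d (M : 'M[R]_d) (v : 'rV[R]_d) :
  (v *m M^T *m v^T) 0 0 = (v *m M *m v^T) 0 0.
Proof.
by rewrite -[in RHS](trmxK (v *m M *m v^T)) [RHS]mxE !trmx_mul !trmxK mulmxA.
Qed.

Section RealField.
Variable R : realFieldType.

Lemma dotmx_ge0 p (u : 'rV[R]_p) : 0 <= (u *m u^T) 0 0.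
Proof. by rewrite mxE; apply: sumr_ge0 => k _; rewrite mxE -expr2 sqr_ge0. Qed.

Lemma dotmx_gt0 p (u : 'rV[R]_p) : u != 0 -> 0 < (u *m u^T) 0 0.
Proof.
move=> u_neq0; rewrite lt_def dotmx_ge0 andbT; apply: contra u_neq0.
rewrite mxE; under eq_bigr do rewrite mxE -expr2.
move=> /eqP/psumr_eq0P u0; apply/eqP/rowP => k; rewrite mxE.
by apply/eqP; rewrite -sqrf_eq0 u0 // => j _; rewrite sqr_ge0.
Qed.

Lemma kermx_signed_row d p (S : 'M[R]_(d, p)) (w : 'rV[R]_p) : (d < p)%N ->
  exists u : 'rV[R]_p, [/\ u != 0, S *m u^T = 0 & 0 <= (w *m u^T) 0 0].
Proof.
move=> ltdp; have : kermx S^T != 0.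
  rewrite -mxrank_eq0 mxrank_ker mxrank_tr subn_eq0 -ltnNge.
  exact: leq_ltn_trans (rank_leq_row S) ltdp.
case/rowV0Pn => u0 /sub_kermxP Su0 u0_neq0.
have Su0T : S *m u0^T = 0 by rewrite -[S]trmxK -trmx_mul Su0 trmx0.
have [w_ge0 | w_lt0] := leP 0 ((w *m u0^T) 0 0).
  by exists u0.
exists (- u0); rewrite oppr_eq0 linearN /= !mulmxN Su0T oppr0 mxE oppr_ge0.
by split=> //; apply: ltW.
Qed.

Lemma mx_entries_bounded a b (M : 'M[R]_(a, b)) :
  exists2 C, 0 < C & forall x y, `|M x y| <= C.
Proof.
exists (1 + \sum_x \sum_y `|M x y|).
  by rewrite ltr_pwDl // sumr_ge0 // => x _; rewrite sumr_ge0.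
move=> x y; rewrite (bigD1 x) //= (bigD1 y) //= addrCA -addrA lerDl.
by rewrite !addr_ge0 // !sumr_ge0 // => *; rewrite sumr_ge0.
Qed.

Lemma small_circle_point (m q delta : R) : 0 < m -> 0 <= q -> 0 < delta ->
  exists a b, [/\ 0 < a, 0 <= b, a + b < delta & b * b * m + a * a * q = 2 * a].
Proof.
move=> m_gt0 q_ge0 delta_gt0.
(* (a, b) = (2 m r^2, 2 r) / (1 + m q r^2) parametrises the circle; this r
   makes a + b <= 2 (m + 1) r < delta. *)
pose r := delta / (delta + 4 * (m + 1)).
have r_def : r * (delta + 4 * (m + 1)) = delta.
  by rewrite divfK // gt_eqF //; lra.
have r_gt0 : 0 < r by rewrite divr_gt0 //; lra.
clearbody r.
pose e := 1 + m * q * (r * r).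
have e_ge1 : 1 <= e by rewrite /e lerDl !mulr_ge0 // ltW.
have e_neq0 : e != 0 by rewrite gt_eqF //; lra.
exists (2 * m * (r * r) / e), (2 * r / e); split.
- by rewrite divr_gt0 //; [rewrite !mulr_gt0 | lra].
- by rewrite divr_ge0 //; lra.
- by rewrite -mulrDl ltr_pdivrMr; [nra | lra].
- by rewrite /e; field.
Qed.

End RealField.

Lemma loewner_ge1_symmetrize (R : realType) d (M : 'M[R]_d) :
  (forall v : 'rV[R]_d, (v *m v^T) 0 0 <= (v *m M *m v^T) 0 0) ->
  loewner_ge (2^-1 *: (M^T + M)) 1%:M.
Proof.
move=> Mv; split.
  by rewrite linearB /= trmx1 linearZ /= linearD /= trmxK [M + _]addrC.
move=> v; rewrite mulmxBr mulmxBl mulmx1 -scalemxAr -scalemxAl mulmxDr mulmxDl.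
rewrite [X in 0 <= X]mxE [X in 0 <= _ + X]mxE [X in 0 <= X - _]mxE.
rewrite [X in 0 <= _ * X - _]mxE quad_form_tr.
by have := Mv v; lra.
Qed.

Section BlockObjective.
Variables (R : realType) (n d p : nat) (A : 'I_n -> 'I_n -> 'M[R]_d).
Hypothesis symA : block_sym A.

(* For symmetric A, 2 * block_grad S i is the gradient of fobj A in S i. *)
Definition block_grad (S : 'I_n -> 'M[R]_(d, p)) (i : 'I_n) : 'M[R]_(d, p) :=
  \sum_k A i k *m S k.

Lemma Lambda_block_grad S i :
  Lambda A S i =
  2^-1 *: ((block_grad S i *m (S i)^T)^T + block_grad S i *m (S i)^T).
Proof.
rewrite /Lambda /block_grad big_split /= trmx_mul trmxK linear_sum /=.
rewrite mulmx_sumr mulmx_suml; congr (_ *: (_ + _)).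
by apply: eq_bigr => j _; rewrite trmx_mul symA mulmxA.
Qed.

Lemma frob_inner_update (M : 'M[R]_d) (X Y D : 'M[R]_(d, p)) (x y : R) :
  frob_inner M ((X + x *: D) *m (Y + y *: D)^T) =
  frob_inner M (X *m Y^T) + x * \tr (M *m (Y *m D^T))
  + y * \tr (M *m (D *m X^T)) + x * y * \tr (M *m (D *m D^T)).
Proof.
rewrite /frob_inner !trmx_mul !trmxK !linearD /= !linearZ /= !mulmxDl !mulmxDr.
rewrite -!scalemxAl -!scalemxAr ?scalerA !mxtraceD !mxtraceZ.
ring.
Qed.

Lemma fobj_update S i (D : 'M[R]_(d, p)) :
  fobj A (fun k => S k + (k == i)%:R *: D) =
  fobj A S + 2 * \tr (block_grad S i *m D^T) + \tr (A i i *m (D *m D^T)).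
Proof.
rewrite /fobj.
under eq_bigr => j _ do under eq_bigr => k _ do rewrite frob_inner_update.
under eq_bigr => j _ do rewrite !big_split /=.
rewrite !big_split /=.
have grad_tr : \tr (block_grad S i *m D^T) = \sum_k \tr (A i k *m (S k *m D^T)).
  by rewrite mulmx_suml linear_sum; apply: eq_bigr => k _; rewrite mulmxA.
have -> : \sum_j \sum_k (j == i)%:R * \tr (A j k *m (S k *m D^T)) =
    \tr (block_grad S i *m D^T).
  by under eq_bigr => j _ do rewrite -mulr_sumr; rewrite sumr_delta grad_tr.
have -> : \sum_j \sum_k (k == i)%:R * \tr (A j k *m (D *m (S j)^T)) =
    \tr (block_grad S i *m D^T).
  under eq_bigr => j _
    do rewrite (sumr_delta (fun k => \tr (A j k *m (D *m (S j)^T)))).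
  rewrite grad_tr; apply: eq_bigr => j _.
  by rewrite -mxtrace_tr !trmx_mul trmxK symA mxtrace_mulC mulmxA.
have -> : \sum_j \sum_k (j == i)%:R * (k == i)%:R * \tr (A j k *m (D *m D^T)) =
    \tr (A i i *m (D *m D^T)).
  under eq_bigr => j _ do under eq_bigr => k _ do rewrite -mulrA.
  under eq_bigr => j _
    do rewrite -mulr_sumr (sumr_delta (fun k => \tr (A j k *m (D *m D^T)))).
  exact: (sumr_delta (fun j => \tr (A j i *m (D *m D^T)))).
by rewrite mulr2n mulrDl mul1r addrA.
Qed.

Lemma local_max_block_step S i : A i i = 1%:M -> local_max A S ->
  exists2 eps : R, 0 < eps & forall D : 'M[R]_(d, p),
    (S i + D) *m (S i + D)^T = 1%:M -> (forall a b, `|D a b| < eps) ->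
    2 * \tr (block_grad S i *m D^T) + \tr (D *m D^T) <= 0.
Proof.
move=> Aii [feasS [eps [eps_gt0 Smax]]]; exists eps => // D feasD smallD.
have := Smax (fun k => S k + (k == i)%:R *: D).
rewrite fobj_update Aii mul1mx -addrA gerDl; apply.
  move=> k; have [->|neq_ki] := eqVneq k i; first by rewrite scale1r.
  by rewrite scale0r addr0 feasS.
move=> k a b; rewrite !mxE addrAC subrr add0r.
by have [_|_] := eqVneq k i; rewrite ?mul1r ?mul0r ?normr0.
Qed.

End BlockObjective.

Section TangentStep.
Variables (R : realFieldType) (d p : nat).
Variables (Si : 'M[R]_(d, p)) (v : 'rV[R]_d) (u : 'rV[R]_p).
Hypotheses (Si_orth : Si *m Si^T = 1%:M) (Si_u : Si *m u^T = 0).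

Definition tangent_step (a b : R) : 'M[R]_(d, p) :=
  v^T *m (b *: u - a *: (v *m Si)).

Lemma tangent_stepT a b :
  (tangent_step a b)^T = (b *: u^T - a *: (Si^T *m v^T)) *m v.
Proof.
rewrite trmx_mul trmxK linearB /= [(b *: u)^T]linearZ /=.
by rewrite [(a *: _)^T]linearZ /= trmx_mul.
Qed.

Lemma tangent_step_mulT a b : Si *m (tangent_step a b)^T = - (a *: (v^T *m v)).
Proof.
rewrite tangent_stepT mulmxA mulmxBr -!scalemxAr Si_u (mulmxA Si) Si_orth.
by rewrite mul1mx scaler0 sub0r mulNmx scalemxAl.
Qed.

Lemma tangent_step_Tmul a b : tangent_step a b *m Si^T = - (a *: (v^T *m v)).
Proof.
by rewrite -[LHS]trmxK trmx_mul trmxK tangent_step_mulT linearN /= linearZ /=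
  trmx_mul trmxK.
Qed.

Lemma tangent_step_sq a b :
  tangent_step a b *m (tangent_step a b)^T =
  (b * b * (u *m u^T) 0 0 + a * a * (v *m v^T) 0 0) *: (v^T *m v).
Proof.
rewrite tangent_stepT /tangent_step -mulmxA; set w := b *: u - a *: (v *m Si).
have uSi : u *m Si^T = 0 by rewrite -[LHS]trmxK trmx_mul trmxK Si_u trmx0.
have w_sq : w *m (b *: u^T - a *: (Si^T *m v^T)) =
    b * b *: (u *m u^T) + a * a *: (v *m v^T).
  rewrite /w mulmxBl !mulmxBr -!scalemxAl -!scalemxAr !mulmxA uSi mul0mx.
  rewrite -(mulmxA v Si Si^T) Si_orth mulmx1 -(mulmxA v Si u^T) Si_u mulmx0.
  by rewrite !scaler0 subr0 sub0r opprK !scalerA.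
rewrite (mulmxA w) w_sq (mx11_scalar (_ + _)) mul_scalar_mx -scalemxAr.
by rewrite !mxE.
Qed.

Lemma tangent_step_feasible a b :
  b * b * (u *m u^T) 0 0 + a * a * (v *m v^T) 0 0 = 2 * a ->
  (Si + tangent_step a b) *m (Si + tangent_step a b)^T = 1%:M.
Proof.
move=> circle; rewrite linearD /= mulmxDl !mulmxDr Si_orth tangent_step_mulT.
rewrite tangent_step_Tmul tangent_step_sq circle.
by apply/matrixP => x y; rewrite !mxE; ring.
Qed.

Lemma mxtrace_tangent_step (G : 'M[R]_(d, p)) a b :
  \tr (G *m (tangent_step a b)^T) =
  b * (v *m G *m u^T) 0 0 - a * (v *m (G *m Si^T) *m v^T) 0 0.
Proof.
rewrite tangent_stepT mulmxA mxtrace_mulC mulmxA trace_mx11.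
rewrite !mulmxBr -!scalemxAr.
by rewrite !mulmxA [LHS]mxE [X in X + _]mxE [X in _ + X]mxE [X in _ - X]mxE.
Qed.

Lemma tangent_step_entries_bounded : exists2 C : R, 0 < C &
  forall a b x y, 0 <= a -> 0 <= b -> `|tangent_step a b x y| <= (a + b) * C.
Proof.
have [C1 C1_gt0 leC1] := mx_entries_bounded (v^T *m u).
have [C2 C2_gt0 leC2] := mx_entries_bounded (v^T *m (v *m Si)).
exists (C1 + C2) => [|a b x y a_ge0 b_ge0]; first exact: addr_gt0.
rewrite /tangent_step mulmxBr -!scalemxAr.
move: (v^T *m u) (v^T *m (v *m Si)) leC1 leC2 => M1 M2 leC1 leC2.
rewrite !mxE (le_trans (ler_normB _ _)) // !normrM.
rewrite (ger0_norm a_ge0) (ger0_norm b_ge0).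
have := leC1 x y; have := leC2 x y; nra.
Qed.

End TangentStep.

Theorem lemma3 (R : realType) (n d p : nat)
  (A : 'I_n -> 'I_n -> 'M[R]_d) (S : 'I_n -> 'M[R]_(d, p)) :
  block_sym A ->
  (forall i, A i i = 1%:M) ->
  (d < p)%N ->
  local_max A S ->
  forall i : 'I_n, loewner_ge (Lambda A S i) 1%:M.
Proof.
move=> symA Aii ltdp Smax i.
have [eps eps_gt0 step_le0] := local_max_block_step symA (Aii i) Smax.
have Si_orth : S i *m (S i)^T = 1%:M by case: Smax.
rewrite Lambda_block_grad //; apply: loewner_ge1_symmetrize => v.
have [u [u_neq0 Si_u Gu_ge0]] :=
  kermx_signed_row (S i) (v *m block_grad A S i) ltdp.
have [C C_gt0 stepC] := tangent_step_entries_bounded (S i) v u.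
have [a [b [a_gt0 b_ge0 ab_small circle]]] :=
  small_circle_point (dotmx_gt0 u_neq0) (dotmx_ge0 v) (divr_gt0 eps_gt0 C_gt0).
have step_small x y : `|tangent_step (S i) v u a b x y| < eps.
  by rewrite (le_lt_trans (stepC _ _ _ _ (ltW a_gt0) b_ge0)) // -ltr_pdivlMr.
have := step_le0 _ (tangent_step_feasible Si_orth Si_u circle) step_small.
rewrite mxtrace_tangent_step tangent_step_sq // circle mxtraceZ mxtrace_mulC.
by rewrite trace_mx11; have := mulr_ge0 b_ge0 Gu_ge0; nra.
Qed.
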